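(* Let $n\ge3$. For a non-degenerate $n$-gon $Z=(z_1,\dots,z_n)$ put $a_i=[z_i-z_{i-1},z_{i+1}-z_i]$, and for $k=1,\dots,n$ let $W_k=(w_{1k},\dots,w_{nk})$ be the tangent vector at $Z$ with $w_{ik}=0$ for $i\notin\{k,k+1\}$, $w_{k,k}=a_{k+1}(z_k-z_{k-1})$ and $w_{k+1,k}=a_k(z_{k+2}-z_{k+1})$. Then at every $Z\in U_n$ the vectors $W_1,\dots,W_n$ are linearly independent and span the fiber $F(Z)$ of the dual Birkhoff distribution.
   Context: $[\cdot,\cdot]$ is the determinant of two plane vectors; indices are cyclic. $G_n$ is the set of $n$-gons in $\mathbb R^2$ with $z_i\ne z_{i+1}$ for all $i$; $U_n\subset G_n$ is the open set of non-degenerate $n$-gons (no three consecutive vertices collinear). The dual Birkhoff distribution $\mathcal F$ on $G_n$: a tangent vector $W=(w_1,\dots,w_n)$ (velocities of the vertices) lies in $\mathcal F$ iff for each $i$ the induced motion of the line $z_iz_{i+1}$ is an infinitesimal rotation about the midpoint of $z_iz_{i+1}$; equivalently $[w_i+w_{i+1},z_{i+1}-z_i]=0$ for all $i$. $F(Z)$ denotes the fiber of $\mathcal F$ at $Z$. *)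

(* Plane vectors are row vectors 'rV[R]_2; an n-gon is a map
   'I_n -> 'rV[R]_2 (vertex i = z_{i+1} in the paper's 1-based numbering);
   indices are cyclic via ordS / ord_pred. *)
From HB Require Import structures.
From mathcomp Require Import all_boot all_order all_algebra.
Set Implicit Arguments. Unset Strict Implicit. Unset Printing Implicit Defensive.
Import Order.TTheory GRing.Theory Num.Theory.
Local Open Scope ring_scope.

Section Defs.
Variables (R : realFieldType) (n : nat).

Definition det2 (u v : 'rV[R]_2) : R := u 0 0 * v 0 1 - u 0 1 * v 0 0.

Definition nxt (i : 'I_n) : 'I_n := ordS i.
Definition prv (i : 'I_n) : 'I_n := ord_pred i.

Definition collinear (a b c : 'rV[R]_2) : Prop := det2 (b - a) (c - a) = 0.

Definition in_G (Z : 'I_n -> 'rV[R]_2) : Prop := forall i, Z i <> Z (nxt i).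

Definition in_U (Z : 'I_n -> 'rV[R]_2) : Prop :=
  in_G Z /\ forall i, ~ collinear (Z (prv i)) (Z i) (Z (nxt i)).

Definition in_F (Z W : 'I_n -> 'rV[R]_2) : Prop :=
  forall i, det2 (W i + W (nxt i)) (Z (nxt i) - Z i) = 0.

Definition acoef (Z : 'I_n -> 'rV[R]_2) (i : 'I_n) : R :=
  det2 (Z i - Z (prv i)) (Z (nxt i) - Z i).

Definition Wvec (Z : 'I_n -> 'rV[R]_2) (k : 'I_n) : 'I_n -> 'rV[R]_2 :=
  fun i => if i == k then acoef Z (nxt k) *: (Z k - Z (prv k))
           else if i == nxt k then acoef Z k *: (Z (nxt (nxt k)) - Z (nxt k))
           else 0.

End Defs.

(* Write e_i = z_{i+1} - z_i, so that a_i = [e_{i-1}, e_i] and, on U_n, every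
   pair (e_{i-1}, e_i) is a basis of the plane.  The i-th velocity of
   sum_k c_k W_k is c_i a_{i+1} e_{i-1} + c_{i-1} a_{i-1} e_i, so independence
   is read off the e_{i-1}-coordinate.  The Birkhoff condition along edge i
   only sees c_i, through c_i a_{i+1} [e_{i-1}, e_i] + c_i a_i [e_{i+1}, e_i] = 0.
   Conversely, for V in F(Z) the choice c_k = [v_k, e_k] / (a_k a_{k+1}) gives
   the right e_{i-1}-coordinate of v_i by Cramer's rule, and the condition
   [v_{i-1} + v_i, e_{i-1}] = 0 gives the right e_i-coordinate. *)
From HB Require Import structures.
From mathcomp Require Import all_boot all_order all_algebra.
From mathcomp Require Import zify ring.
Import Order.TTheory GRing.Theory Num.Theory.
Local Open Scope ring_scope.

Lemma nxt_prv n (i : 'I_n) : nxt (prv i) = i.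
Proof. exact: ord_predK. Qed.

Lemma prv_nxt n (i : 'I_n) : prv (nxt i) = i.
Proof. exact: ordSK. Qed.

Lemma prv_neq {n} (i : 'I_n) : (1 < n)%N -> prv i != i.
Proof.
move=> n_gt1; apply/eqP => /(congr1 val); case: i => [[|i] /= i_lt].
  by rewrite modn_small; lia.
by rewrite modnDr modn_small; lia.
Qed.

Section PlaneVectors.
Context {R : realFieldType}.
Implicit Types (u v w : 'rV[R]_2) (x y z t : R).

Lemma rowv2P u v : u 0 0 = v 0 0 -> u 0 1 = v 0 1 -> u = v.
Proof.
move=> eq0 eq1; apply/rowP; case=> [[|[|//]]] j_lt.
  by rewrite (_ : Ordinal j_lt = 0) //; apply: val_inj.
by rewrite (_ : Ordinal j_lt = 1) //; apply: val_inj.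
Qed.

Lemma det2C u v : det2 v u = - det2 u v.
Proof. rewrite /det2; ring. Qed.

Lemma det2_addl u v w : det2 (u + v) w = det2 u w + det2 v w.
Proof. rewrite /det2 !mxE; ring. Qed.

Lemma det2_combl u v x y : det2 (x *: u + y *: v) v = x * det2 u v.
Proof. rewrite /det2 !mxE; ring. Qed.

Lemma det2_comb3 u v w x y z t :
  det2 (x *: u + y *: v + (z *: v + t *: w)) v = x * det2 u v - t * det2 v w.
Proof. rewrite /det2 !mxE; ring. Qed.

Lemma det2_decomp u v w : det2 u v != 0 ->
  w = (det2 w v / det2 u v) *: u + (det2 u w / det2 u v) *: v.
Proof.
rewrite /det2 => uv_neq0.
by apply: rowv2P; rewrite !mxE; field.
Qed.

End PlaneVectors.

Section Polygon.
Context {R : realFieldType} {n : nat} (Z : 'I_n -> 'rV[R]_2).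

Definition edge (i : 'I_n) : 'rV[R]_2 := Z (nxt i) - Z i.

Lemma acoefE i : acoef Z i = det2 (edge (prv i)) (edge i).
Proof. by rewrite /acoef /edge nxt_prv. Qed.

Lemma acoef_neq0 : in_U Z -> forall i, acoef Z i != 0.
Proof.
move=> [_ noncollinear] i; apply/eqP => a_eq0; apply: (noncollinear i).
by rewrite /collinear -a_eq0 /acoef /det2 !mxE; ring.
Qed.

Hypothesis n_gt1 : (1 < n)%N.

Lemma sum_Wvec (c : 'I_n -> R) i :
  \sum_(k < n) c k *: Wvec Z k i =
  c i *: (acoef Z (nxt i) *: edge (prv i)) + c (prv i) *: (acoef Z (prv i) *: edge i).
Proof.
have prv_i_neq := prv_neq i n_gt1.
rewrite (bigD1 i) //= (bigD1 (prv i)) //= big1 ?addr0.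
  by rewrite /Wvec /edge eqxx eq_sym (negbTE prv_i_neq) !nxt_prv eqxx.
move=> k /andP [k_neq_i k_neq_prv]; rewrite /Wvec eq_sym (negbTE k_neq_i).
case: ifP => [/eqP i_nxt_k | _]; last by rewrite scaler0.
by move: k_neq_prv; rewrite i_nxt_k prv_nxt eqxx.
Qed.

Lemma Wvec_free (c : 'I_n -> R) : in_U Z ->
  (forall i, \sum_(k < n) c k *: Wvec Z k i = 0) -> forall k, c k = 0.
Proof.
move=> UZ comb_eq0 k; have := comb_eq0 k.
rewrite sum_Wvec !scalerA => /(congr1 (fun w => det2 w (edge k))).
rewrite det2_combl -acoefE /det2 !mxE !mul0r subrr => /eqP.
by rewrite !mulf_eq0 !(negbTE (acoef_neq0 UZ _)) !orbF => /eqP.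
Qed.

Lemma Wcomb_in_F (c : 'I_n -> R) : in_F Z (fun i => \sum_(k < n) c k *: Wvec Z k i).
Proof.
move=> i; rewrite -/(edge i) !sum_Wvec !prv_nxt !scalerA det2_comb3.
by rewrite !acoefE prv_nxt; ring.
Qed.

Definition Wcoord (V : 'I_n -> 'rV[R]_2) (k : 'I_n) : R :=
  det2 (V k) (edge k) / (acoef Z k * acoef Z (nxt k)).

Lemma in_F_Wcomb V : in_U Z -> in_F Z V ->
  forall i, V i = \sum_(k < n) Wcoord V k *: Wvec Z k i.
Proof.
move=> UZ FV i; have a_neq0 := acoef_neq0 UZ.
have F_prv : det2 (V (prv i)) (edge (prv i)) = det2 (edge (prv i)) (V i).
  apply/eqP; rewrite -subr_eq0 [det2 (edge _) _]det2C opprK -det2_addl.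
  by move: (FV (prv i)); rewrite /edge nxt_prv => ->.
have basis_i : det2 (edge (prv i)) (edge i) != 0 by rewrite -acoefE.
rewrite sum_Wvec !scalerA {1}(det2_decomp _ _ (V i) basis_i) -acoefE.
rewrite /Wcoord nxt_prv F_prv.
by congr (_ *: _ + _ *: _); field; rewrite ?a_neq0.
Qed.

End Polygon.

Theorem lemma2p4 (R : realFieldType) (n : nat) (hn : (3 <= n)%N)
    (Z : 'I_n -> 'rV[R]_2) :
  in_U Z ->
  (* linear independence of W_1, ..., W_n *)
  (forall c : 'I_n -> R,
      (forall i, \sum_(k < n) c k *: Wvec Z k i = 0) -> forall k, c k = 0) /\
  (* they span exactly the fiber F(Z) *)
  (forall V : 'I_n -> 'rV[R]_2,
      in_F Z V <-> exists c : 'I_n -> R, forall i, V i = \sum_(k < n) c k *: Wvec Z k i).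
Proof.
have n_gt1 : (1 < n)%N by apply: leq_trans hn.
move=> UZ; split=> [c | V]; first exact: Wvec_free.
split=> [FV | [c V_eq] i].
  by exists (Wcoord Z V); exact: in_F_Wcomb.
by rewrite !V_eq; exact: Wcomb_in_F.
Qed.
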